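(* There are universal constants $K,C>0$ such that: fix $\epsilon>0$ with $Kd^3\sqrt\epsilon\leqslant1$; suppose $A\in\mathbb{R}^{m\times n_d}$ satisfies the RRCP with respect to $G$ with constant $\epsilon$ and each $W_i\in\mathbb{R}^{n_i\times n_{i-1}}$ satisfies the WDC with constant $\epsilon$. Then for any $x_*\in\mathbb{R}^k\setminus\{0\}$, $\eta\in\mathbb{R}^m$, any $x\in\mathbb{R}^k\setminus\{0\}$ and any $v_x\in\partial f(x)$, $\|v_x\|\leqslant\frac{Cd}{2^d}\max(\|x\|,\|x_*\|)+\frac{2}{2^{d/2}}\|\eta\|$.
   Context: Network: $k=n_0<\dots<n_d=n$, $G(x)=\mathrm{relu}(W_d\cdots\mathrm{relu}(W_1x)\cdots)$. $W_{+,x}:=\mathrm{diag}(Wx>0)W$. $\theta_{x,y}=\angle(x,y)$, $\hat x=x/\|x\|$, $M_{\hat x\leftrightarrow\hat y}$ the symmetric matrix swapping $\hat x,\hat y$ and vanishing on $\mathrm{span}(x,y)^\perp$ ($\pm\hat x\hat x^\top$ in degenerate cases). WDC with constant $\epsilon$: $\|W_{+,x}^\top W_{+,y}-(\frac{\pi-\theta_{x,y}}{2\pi}I+\frac{\sin\theta_{x,y}}{2\pi}M_{\hat x\leftrightarrow\hat y})\|\leqslant\epsilon$ for all nonzero $x,y$. $A_z:=\mathrm{diag}(\mathrm{sgn}(Az))A$ ($\mathrm{sgn}(0)=0$); $\Phi_{z,w}=\frac{\pi-2\theta_{z,w}}{\pi}I_n+\frac{2\sin\theta_{z,w}}{\pi}M_{\hat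 z\leftrightarrow\hat w}$ for $z,w\neq0$, else $0$. RRCP with constant $\epsilon$: $|\langle(A_{G(x)}^\top A_{G(y)}-\Phi_{G(x),G(y)})(G(x_1)-G(x_2)),G(x_3)-G(x_4)\rangle|\leqslant L\epsilon\|G(x_1)-G(x_2)\|\|G(x_3)-G(x_4)\|$ for all $x,y,x_1,\dots,x_4$, $L=33$. $f(x)=\frac12\||AG(x)|-b_*\|^2$ with $b_*=|AG(x_* )|+\eta$; $\partial f$ is the Clarke generalized subdifferential. *)

From HB Require Import structures.
From mathcomp Require Import all_boot all_order all_algebra.
From mathcomp Require Import all_classical all_reals.
From mathcomp Require Import trigo.
Set Implicit Arguments.
Unset Strict Implicit.
Unset Printing Implicit Defensive.
Import Order.TTheory GRing.Theory Num.Theory.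
Local Open Scope ring_scope.

Section Defs.
Variable R : realType.

Definition dotv n (u v : 'cV[R]_n) : R := (u^T *m v) 0 0.
Definition normv n (u : 'cV[R]_n) : R := Num.sqrt (dotv u u).

Definition opnorm_le m n (M : 'M[R]_(m, n)) (e : R) : Prop :=
  forall u : 'cV[R]_n, normv (M *m u) <= e * normv u.

Definition angle n (x y : 'cV[R]_n) : R := acos (dotv x y / (normv x * normv y)).

Definition unitv n (x : 'cV[R]_n) : 'cV[R]_n := (normv x)^-1 *: x.

(* M_{x^ <-> y^}: the symmetric matrix mapping x^ to y^ and y^ to x^, vanishing on
   span(x,y)^perp; equal to +- x^ x^^T in the degenerate (collinear) cases. *)
Definition Mswap n (x y : 'cV[R]_n) : 'M[R]_n :=
  let u := unitv x in let w := unitv y in let c := dotv u w in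
  if c == 1 then u *m u^T
  else if c == -1 then - (u *m u^T)
  else (1 - c ^+ 2)^-1 *: ((u *m w^T + w *m u^T) - c *: (u *m u^T + w *m w^T)).

Definition relu n (x : 'cV[R]_n) : 'cV[R]_n := map_mx (fun t => Num.max t 0) x.

(* the network G(x) = relu(W_d ... relu(W_1 x)); layer i+1 uses W i *)
Fixpoint netG (dims : nat -> nat) (W : forall i, 'M[R]_(dims i.+1, dims i)) (j : nat)
  : 'cV[R]_(dims 0) -> 'cV[R]_(dims j) :=
  match j with
  | 0 => fun x => x
  | j'.+1 => fun x => relu (W j' *m netG W j' x)
  end.

Definition Wplus p q (W : 'M[R]_(p, q)) (x : 'cV[R]_q) : 'M[R]_(p, q) :=
  diag_mx (\row_i (if 0 < (W *m x) i 0 then 1 else 0)) *m W.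

Definition Qwdc n (x y : 'cV[R]_n) : 'M[R]_n :=
  ((pi - angle x y) / (2 * pi)) *: 1%:M + (sin (angle x y) / (2 * pi)) *: Mswap x y.

Definition WDC p q (W : 'M[R]_(p, q)) (eps : R) : Prop :=
  forall x y : 'cV[R]_q, x != 0 -> y != 0 ->
    opnorm_le ((Wplus W x)^T *m Wplus W y - Qwdc x y) eps.

Definition Asgn m n (A : 'M[R]_(m, n)) (z : 'cV[R]_n) : 'M[R]_(m, n) :=
  diag_mx (\row_i Num.sg ((A *m z) i 0)) *m A.

Definition Phi n (z w : 'cV[R]_n) : 'M[R]_n :=
  if (z != 0) && (w != 0) then
    ((pi - 2 * angle z w) / pi) *: 1%:M + (2 * sin (angle z w) / pi) *: Mswap z w
  else 0.

(* Range Restricted Concentration Property with constant eps, L = 33 *)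
Definition RRCP m k n (A : 'M[R]_(m, n)) (G : 'cV[R]_k -> 'cV[R]_n) (eps : R) : Prop :=
  forall x y x1 x2 x3 x4 : 'cV[R]_k,
    `| dotv (((Asgn A (G x))^T *m Asgn A (G y) - Phi (G x) (G y)) *m (G x1 - G x2))
            (G x3 - G x4) |
    <= 33 * eps * normv (G x1 - G x2) * normv (G x3 - G x4).

(* Clarke generalized subdifferential (via Clarke's generalized directional derivative):
   xi \in df(x) iff for all v, <xi, v> <= limsup_{y -> x, t \downarrow 0} (f(y+tv)-f(y))/t. *)
Definition clarke_subdiff k (f : 'cV[R]_k -> R) (x xi : 'cV[R]_k) : Prop :=
  forall v : 'cV[R]_k, forall e delta : R, 0 < e -> 0 < delta ->
    exists (y : 'cV[R]_k) (t : R),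
      normv (y - x) < delta /\ 0 < t < delta /\
      dotv xi v - e < (f (y + t *: v) - f y) / t.

Definition absv n (u : 'cV[R]_n) : 'cV[R]_n := map_mx (fun t => `|t|) u.
Definition loss m k n (A : 'M[R]_(m, n)) (G : 'cV[R]_k -> 'cV[R]_n) (b : 'cV[R]_m)
  (x : 'cV[R]_k) : R :=
  2^-1 * normv (absv (A *m G x) - b) ^+ 2.

End Defs.

From HB Require Import structures.
From mathcomp Require Import all_boot all_order all_algebra.
From mathcomp Require Import all_classical all_reals.
From mathcomp Require Import trigo.
From mathcomp Require Import ring lra.
Set Implicit Arguments.
Unset Strict Implicit.
Unset Printing Implicit Defensive.
Import Order.TTheory GRing.Theory Num.Theory.
Local Open Scope ring_scope.

(* Taking x = y in the WDC shows that every active-set restriction [Wplus W z] nearly halves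
   squared norms.  Near a point h <> 0 the signs of the nonzero coordinates of W h are frozen,
   so relu (W a) - relu (W b) is controlled by the restrictions at z, -z and -h for a point z
   close to h; this makes each layer locally Lipschitz with constant (1/2 + 3 eps)^(1/2) and G
   locally Lipschitz with constant (1/2 + 3 eps)^(d/2).  Taking x = y, x1 = x3, x2 = x4 in the
   RRCP makes |A .| Lipschitz on the range of G with constant (2 (1 + 33 eps))^(1/2), so the
   residual g y = |A G y| - b is locally M-Lipschitz with M ~ 2^(1 - d/2).  For f = |g|^2 / 2
   every Clarke subgradient at x has norm at most M |g x|, and |g x| <= M (|x| + |x_*|) + |eta|. *)

Section Scalars.
Variable R : realType.

Lemma sgr_eq_of_dist_lt (x h : R) : `|x - h| < `|h| -> Num.sg x = Num.sg h.
Proof.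
case: (ltrgt0P h) => [h_gt0|h_lt0|_]; last by rewrite ltNge normr_ge0.
- by rewrite ltr_norml => /andP [lo _]; rewrite !gtr0_sg //; lra.
- by rewrite ltr_norml => /andP [_ hi]; rewrite !ltr0_sg //; lra.
Qed.

Lemma exists_norm_lbound_neq0 n (f : 'I_n -> R) :
  exists2 s : R, 0 < s & forall i, f i != 0 -> s <= `|f i|.
Proof.
pose S := 1 + \sum_i `|f i|^-1.
have S_ge1 : 1 <= S by rewrite lerDl; apply: sumr_ge0 => i _; rewrite invr_ge0.
have S_gt0 : 0 < S by apply: lt_le_trans S_ge1.
exists S^-1 => [|i fi_neq0]; first by rewrite invr_gt0.
have fi_gt0 : 0 < `|f i| by rewrite normr_gt0.
rewrite -[`|f i|]invrK lef_pV2 ?posrE ?invr_gt0 //.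
rewrite /S (bigD1 i) //=.
have : 0 <= \sum_(j < n | j != i) `|f j|^-1 by apply: sumr_ge0 => j _; rewrite invr_ge0.
lra.
Qed.

(* Coordinatewise form of the layer estimate: [X], [Y], [H], [E] are the coordinates of
   [W a], [W b], [W h] and [W z], where [z] is [h] moved by [dl] in the direction [a - b]. *)
Lemma relu_sqdiff_le (X Y H E dl : R) : 0 < dl ->
  (H != 0 -> [/\ Num.sg X = Num.sg H, Num.sg Y = Num.sg H & Num.sg E = Num.sg H]) ->
  (H = 0 -> E = dl * (X - Y)) ->
  (Num.max X 0 - Num.max Y 0) ^+ 2 <=
    (if 0 < E then (X - Y) ^+ 2 else 0) + (if 0 < - E then (X - Y) ^+ 2 else 0)
    - (if 0 < - H then (X - Y) ^+ 2 else 0).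
Proof.
move=> dl_gt0 sg_eq H0_E.
have XY_sqr_ge0 := sqr_ge0 (X - Y).
case: (ltrgt0P H) => [H_gt0|H_lt0|H0].
- have [] := sg_eq (lt0r_neq0 H_gt0); rewrite (gtr0_sg H_gt0) => sX sY sE.
  have [X_gt0 Y_gt0 E_gt0] : [/\ 0 < X, 0 < Y & 0 < E].
    by rewrite -(sgr_gt0 X) -(sgr_gt0 Y) -(sgr_gt0 E) sX sY sE ltr01.
  rewrite (max_l (ltW X_gt0)) (max_l (ltW Y_gt0)).
  by case: (ltrP 0 E) => ?; case: (ltrP 0 (- E)) => ?; case: (ltrP 0 (- H)) => ?; lra.
- have [] := sg_eq (ltr0_neq0 H_lt0); rewrite (ltr0_sg H_lt0) => sX sY sE.
  have [X_lt0 Y_lt0 E_lt0] : [/\ X < 0, Y < 0 & E < 0].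
    by rewrite -(sgr_lt0 X) -(sgr_lt0 Y) -(sgr_lt0 E) sX sY sE ltrN10.
  rewrite (max_r (ltW X_lt0)) (max_r (ltW Y_lt0)) subrr expr0n /=.
  by case: (ltrP 0 E) => ?; case: (ltrP 0 (- E)) => ?; case: (ltrP 0 (- H)) => ?; lra.
- have -> := H0_E H0; rewrite H0 oppr0 ltxx subr0.
  have relu_lip : (Num.max X 0 - Num.max Y 0) ^+ 2 <= (X - Y) ^+ 2.
    by case: (leP X 0) => ?; case: (leP Y 0) => ?; nra.
  apply: le_trans relu_lip _.
  case: (ltrgt0P (X - Y)) => [XY_gt0|XY_lt0|XY0].
  + have E_gt0 : 0 < dl * (X - Y) by rewrite mulr_gt0.
    by rewrite E_gt0 oppr_gt0 ltNge (ltW E_gt0) addr0.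
  + have E_lt0 : dl * (X - Y) < 0 by rewrite pmulr_rlt0.
    by rewrite oppr_gt0 E_lt0 ltNge (ltW E_lt0) add0r.
  + by rewrite XY0 expr0n /= !if_same addr0.
Qed.

Lemma sqr_normr_sub_le_sg (c e : R) :
  (`|c| - `|e|) ^+ 2 <= (Num.sg c * (c - e)) ^+ 2 + (Num.sg e * (c - e)) ^+ 2.
Proof.
have dist_le : (`|c| - `|e|) ^+ 2 <= (c - e) ^+ 2.
  rewrite -[X in X <= _]real_normK ?num_real // -[X in _ <= X]real_normK ?num_real //.
  by rewrite ler_sqr ?nnegrE ?normr_ge0 // ler_dist_dist.
have sg_sqr (y : R) z : y != 0 -> (Num.sg y * z) ^+ 2 = z ^+ 2.
  by move=> y_neq0; rewrite exprMn sqr_sg y_neq0 mul1r.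
have [c0|c_neq0] := eqVneq c 0; last first.
  by rewrite sg_sqr //; have := sqr_ge0 (Num.sg e * (c - e)); lra.
have [e0|e_neq0] := eqVneq e 0; last first.
  by rewrite (sg_sqr e) //; have := sqr_ge0 (Num.sg c * (c - e)); lra.
by rewrite c0 e0 normr0 subrr expr0n /= sgr0 mul0r expr0n addr0.
Qed.

Lemma ler_of_forall_addr (a b c rho : R) : 0 < rho ->
  (forall r, 0 < r < rho -> a <= b + c * r) -> a <= b.
Proof.
move=> rho_gt0 a_le; apply/ler_addgt0Pr => e e_gt0.
pose r := Num.min (rho / 2) (e / (1 + `|c|)).
have c_ge0 := normr_ge0 c.
have r_gt0 : 0 < r by rewrite lt_min !divr_gt0 //; lra.
have r_lt : r < rho.
  have : rho / 2 < rho by lra.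
  by apply: le_lt_trans; rewrite ge_min lexx.
have cr_le : c * r <= e.
  have : r * (1 + `|c|) <= e by rewrite -ler_pdivlMr ?ge_min ?lexx ?orbT //; lra.
  have := ler_wpM2r (ltW r_gt0) (ler_norm c); nra.
by apply: le_trans (a_le r _) _; rewrite ?r_gt0 ?r_lt ?lerD2l.
Qed.

End Scalars.

Section Euclid.
Variables (R : realType) (n : nat).
Implicit Types u v w : 'cV[R]_n.

Lemma dotvE u v : dotv u v = \sum_i u i 0 * v i 0.
Proof. by rewrite /dotv !mxE; apply: eq_bigr => i _; rewrite mxE. Qed.

Lemma dotvC u v : dotv u v = dotv v u.
Proof. by rewrite !dotvE; apply: eq_bigr => i _; rewrite mulrC. Qed.

Lemma dotvDl u v w : dotv (u + v) w = dotv u w + dotv v w.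
Proof. by rewrite !dotvE -big_split; apply: eq_bigr => i _; rewrite mxE mulrDl. Qed.

Lemma dotvNl u w : dotv (- u) w = - dotv u w.
Proof. by rewrite !dotvE -sumrN; apply: eq_bigr => i _; rewrite mxE mulNr. Qed.

Lemma dotvZl a u w : dotv (a *: u) w = a * dotv u w.
Proof. by rewrite !dotvE mulr_sumr; apply: eq_bigr => i _; rewrite mxE mulrA. Qed.

Lemma dotv0l v : dotv 0 v = 0.
Proof. by rewrite dotvE big1 // => i _; rewrite mxE mul0r. Qed.

Lemma dotvBl u v w : dotv (u - v) w = dotv u w - dotv v w.
Proof. by rewrite dotvDl dotvNl. Qed.

Lemma dotvDr u v w : dotv w (u + v) = dotv w u + dotv w v.
Proof. by rewrite dotvC dotvDl !(dotvC w). Qed.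

Lemma dotvBr u v w : dotv w (u - v) = dotv w u - dotv w v.
Proof. by rewrite dotvC dotvBl !(dotvC w). Qed.

Lemma dotvZr a u w : dotv w (a *: u) = a * dotv w u.
Proof. by rewrite dotvC dotvZl dotvC. Qed.

Lemma dotvv_ge0 u : 0 <= dotv u u.
Proof. by rewrite dotvE; apply: sumr_ge0 => i _; rewrite -expr2 sqr_ge0. Qed.

Lemma dotvv_eq0 u : (dotv u u == 0) = (u == 0).
Proof.
apply/idP/idP => [|/eqP ->]; last by rewrite dotv0l.
rewrite dotvE psumr_eq0 => [/allP u0|i _]; last by rewrite -expr2 sqr_ge0.
apply/eqP/matrixP => i j; rewrite (ord1 j) mxE.
by apply/eqP; rewrite -sqrf_eq0 expr2; apply: u0 (mem_index_enum i).
Qed.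

Lemma dotvv_gt0 u : u != 0 -> 0 < dotv u u.
Proof. by move=> u0; rewrite lt_def dotvv_eq0 u0 dotvv_ge0. Qed.

Lemma normv_ge0 u : 0 <= normv u.
Proof. exact: sqrtr_ge0. Qed.

Lemma normv_sqr u : normv u ^+ 2 = dotv u u.
Proof. by rewrite /normv sqr_sqrtr // dotvv_ge0. Qed.

Lemma normv_eq0 u : (normv u == 0) = (u == 0).
Proof. by rewrite -sqrf_eq0 normv_sqr dotvv_eq0. Qed.

Lemma normv0 : normv (0 : 'cV[R]_n) = 0.
Proof. by apply/eqP; rewrite normv_eq0. Qed.

Lemma normvN u : normv (- u) = normv u.
Proof. by rewrite /normv dotvNl dotvC dotvNl opprK. Qed.

Lemma normvZ a u : normv (a *: u) = `|a| * normv u.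
Proof. by rewrite /normv dotvZl dotvZr mulrA -expr2 sqrtrM ?sqr_ge0 // sqrtr_sqr. Qed.

Lemma normv_le_sqrt (c : R) (m : nat) u (w : 'cV[R]_m) :
  0 <= c -> dotv w w <= c * dotv u u -> normv w <= Num.sqrt c * normv u.
Proof. by move=> c0 le_wu; rewrite -sqrtrM //; apply: ler_wsqrtr. Qed.

Lemma dotv_le_normv u v : dotv u v <= normv u * normv v.
Proof.
have [/eqP|u0] := eqVneq (normv u) 0.
  by rewrite normv_eq0 => /eqP ->; rewrite dotv0l normv0 mul0r.
have [/eqP|v0] := eqVneq (normv v) 0.
  by rewrite normv_eq0 => /eqP ->; rewrite dotvC dotv0l normv0 mulr0.
have := dotvv_ge0 (normv v *: u - normv u *: v).
rewrite !(dotvBl, dotvBr, dotvZl, dotvZr) -!normv_sqr (dotvC v u) => expand_ge0.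
have nu : 0 < normv u by rewrite lt_def u0 normv_ge0.
have nv : 0 < normv v by rewrite lt_def v0 normv_ge0.
have nuv : 0 < normv u * normv v by rewrite mulr_gt0.
rewrite -subr_ge0 -(pmulr_rge0 _ nuv); nra.
Qed.

Lemma normvD u v : normv (u + v) <= normv u + normv v.
Proof.
rewrite -ler_sqr ?nnegrE ?addr_ge0 ?normv_ge0 //.
rewrite normv_sqr !(dotvDl, dotvDr) sqrrD -!normv_sqr (dotvC v u).
have := dotv_le_normv u v; nra.
Qed.

Lemma normvB_le u v : normv (u - v) <= normv u + normv v.
Proof. by rewrite -(normvN v) normvD. Qed.

Lemma normv_coord_le u i : `|u i 0| <= normv u.
Proof.
rewrite -ler_sqr ?nnegrE ?normv_ge0 // normv_sqr dotvE real_normK ?num_real //.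
rewrite (bigD1 i) //= -expr2 lerDl.
by apply: sumr_ge0 => k _; rewrite -expr2 sqr_ge0.
Qed.

Lemma half_sqnormv_sub_le u v :
  2^-1 * normv u ^+ 2 - 2^-1 * normv v ^+ 2 <= 2^-1 * normv (u - v) * (normv u + normv v).
Proof.
have := normvD (u - v) v; rewrite subrK.
have := normv_ge0 u; have := normv_ge0 v; have := normv_ge0 (u - v); nra.
Qed.

End Euclid.

Lemma dotv_mulmxl (R : realType) p q (M : 'M[R]_(p, q)) u v :
  dotv (M *m u) v = dotv u (M^T *m v).
Proof. by rewrite /dotv trmx_mul mulmxA. Qed.

Lemma opnorm_le_dotv (R : realType) n (M : 'M[R]_n) e (u : 'cV[R]_n) :
  opnorm_le M e -> `|dotv u (M *m u)| <= e * dotv u u.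
Proof.
move=> M_le; have Mu_le := M_le u.
have CS1 := dotv_le_normv u (M *m u); have CS2 := dotv_le_normv (- u) (M *m u).
rewrite dotvNl normvN in CS2.
have := normv_ge0 u; have := normv_ge0 (M *m u).
rewrite -normv_sqr; move=> ? ?; apply/ler_normlP; split; nra.
Qed.

Lemma angle_id (R : realType) n (z : 'cV[R]_n) : z != 0 -> angle z z = 0.
Proof.
move=> z_neq0; rewrite /angle -expr2 normv_sqr mulfV ?acos1 //.
by rewrite dotvv_eq0.
Qed.

Lemma Phi_id (R : realType) n (z : 'cV[R]_n) : z != 0 -> Phi z z = 1%:M.
Proof.
move=> z_neq0; rewrite /Phi z_neq0 /= angle_id // sin0 mulr0 mul0r scale0r addr0 subr0.
by rewrite mulfV ?scale1r // gt_eqF ?pi_gt0.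
Qed.

Section Layer.
Variables (R : realType) (p q : nat) (W : 'M[R]_(p, q)).
Implicit Types h u z : 'cV[R]_q.

Lemma WplusE z u i :
  (Wplus W z *m u) i 0 = if 0 < (W *m z) i 0 then (W *m u) i 0 else 0.
Proof. by rewrite /Wplus -mulmxA mul_diag_mx !mxE; case: ifP; rewrite ?mul1r ?mul0r. Qed.

Lemma relu_mulmx z : relu (W *m z) = Wplus W z *m z.
Proof.
apply/matrixP => i j; rewrite (ord1 j) WplusE mxE.
by case: ifP => [/ltW/max_l|/negbT]; last rewrite -leNgt => /max_r.
Qed.

Lemma dotv_Wplus z u : dotv (Wplus W z *m u) (Wplus W z *m u) =
  \sum_i (if 0 < (W *m z) i 0 then (W *m u) i 0 ^+ 2 else 0).
Proof. by rewrite dotvE; apply: eq_bigr => i _; rewrite WplusE; case: ifP; rewrite ?mul0r. Qed.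

Lemma mulmxN_coord u i : (W *m - u) i 0 = - (W *m u) i 0.
Proof. by rewrite mulmxN mxE. Qed.

Lemma mulmxB_coord u u' i : (W *m (u - u')) i 0 = (W *m u) i 0 - (W *m u') i 0.
Proof. by rewrite mulmxBr !mxE. Qed.

Lemma mulmx_coord_le u i :
  `|(W *m u) i 0| <= (1 + \sum_k \sum_j `|W k j|) * normv u.
Proof.
rewrite mxE; apply: (le_trans (ler_norm_sum _ _ _)).
apply: (@le_trans _ _ (\sum_j `|W i j| * normv u)).
  by apply: ler_sum => j _; rewrite normrM ler_wpM2l ?normv_coord_le.
rewrite -mulr_suml ler_wpM2r ?normv_ge0 // (bigD1 i) //=.
have : 0 <= \sum_(k < p | k != i) \sum_j `|W k j| by do 2 apply: sumr_ge0 => ? _.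
lra.
Qed.

Lemma mulmx_sg_locally_constant h : exists2 rho : R, 0 < rho &
  forall u, normv (u - h) < rho ->
  forall i, (W *m h) i 0 != 0 -> Num.sg ((W *m u) i 0) = Num.sg ((W *m h) i 0).
Proof.
have [s s_gt0 s_le] := exists_norm_lbound_neq0 (fun i => (W *m h) i 0).
set c := 1 + \sum_k \sum_j `|W k j|.
have c_gt0 : 0 < c.
  by rewrite /c ltr_pwDl // sumr_ge0 // => k _; apply: sumr_ge0.
exists (s / c) => [|u near_h i Hi_neq0]; first exact: divr_gt0.
apply: sgr_eq_of_dist_lt; apply: lt_le_trans (s_le i Hi_neq0).
rewrite -mulmxB_coord.
apply: le_lt_trans (mulmx_coord_le _ _) _.
by rewrite -ltr_pdivlMl // mulrC.
Qed.

Variable eps : R.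
Hypothesis W_wdc : WDC W eps.

Lemma WDC_dotv_Wplus z u : z != 0 ->
  `|dotv (Wplus W z *m u) (Wplus W z *m u) - 2^-1 * dotv u u| <= eps * dotv u u.
Proof.
move=> z_neq0; have := opnorm_le_dotv u (W_wdc z_neq0 z_neq0).
have -> : Qwdc z z = 2^-1 *: 1%:M.
  have pi_neq0 : pi != 0 :> R by rewrite gt_eqF ?pi_gt0.
  rewrite /Qwdc angle_id // sin0 mul0r scale0r addr0 subr0 invfM mulrCA mulfV //.
  by rewrite mulr1.
rewrite mulmxBl scalemx1 mul_scalar_mx dotvBr dotvZr.
by rewrite -mulmxA -dotv_mulmxl dotvC.
Qed.

Lemma WDC_active_sum_le z u : z != 0 ->
  \sum_i (if 0 < (W *m z) i 0 then (W *m u) i 0 ^+ 2 else 0) <= (2^-1 + eps) * dotv u u.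
Proof. by move=> /(WDC_dotv_Wplus u); rewrite dotv_Wplus => /ler_normlP[]; lra. Qed.

Lemma WDC_active_sum_ge z u : z != 0 ->
  (2^-1 - eps) * dotv u u <= \sum_i (if 0 < (W *m z) i 0 then (W *m u) i 0 ^+ 2 else 0).
Proof. by move=> /(WDC_dotv_Wplus u); rewrite dotv_Wplus => /ler_normlP[]; lra. Qed.

Lemma relu_layer_locally_lipschitz h : h != 0 -> exists2 rho : R, 0 < rho &
  forall a b, normv (a - h) < rho -> normv (b - h) < rho ->
  dotv (relu (W *m a) - relu (W *m b)) (relu (W *m a) - relu (W *m b))
    <= (2^-1 + 3 * eps) * dotv (a - b) (a - b).
Proof.
move=> h_neq0; have [rho rho_gt0 sg_near] := mulmx_sg_locally_constant h.
have h_gt0 : 0 < normv h by rewrite lt_def normv_eq0 h_neq0 normv_ge0.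
set r := Num.min rho (normv h).
have r_gt0 : 0 < r by rewrite lt_min rho_gt0.
have r_le_rho u : normv (u - h) < r -> normv (u - h) < rho.
  by move=> /lt_le_trans; apply; rewrite ge_min lexx.
exists r => // a b a_near b_near.
set v := a - b.
have v_ge0 := normv_ge0 v.
pose dl := r / (1 + normv v).
have dl_gt0 : 0 < dl by apply: divr_gt0 => //; lra.
pose z := h + dl *: v.
have z_near : normv (z - h) < r.
  rewrite /z addrAC subrr add0r normvZ gtr0_norm // /dl mulrAC ltr_pdivrMr; nra.
have z_neq0 : z != 0.
  by apply: contraTneq z_near => ->; rewrite sub0r normvN -leNgt ge_min lexx orbT.
have split_sum :
  dotv (relu (W *m a) - relu (W *m b)) (relu (W *m a) - relu (W *m b)) <=
    \sum_i (if 0 < (W *m z) i 0 then (W *m v) i 0 ^+ 2 else 0)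
  + \sum_i (if 0 < (W *m - z) i 0 then (W *m v) i 0 ^+ 2 else 0)
  - \sum_i (if 0 < (W *m - h) i 0 then (W *m v) i 0 ^+ 2 else 0).
  rewrite dotvE -big_split -sumrB /=; apply: ler_sum => i _.
  have relu_sub (X Y : 'cV[R]_p) :
      (relu X - relu Y) i 0 = Num.max (X i 0) 0 - Num.max (Y i 0) 0 by rewrite !mxE.
  rewrite relu_sub -expr2 mulmxB_coord !mulmxN_coord; apply: (relu_sqdiff_le dl_gt0) => [Hi_neq0|Hi0].
    by split; apply: sg_near => //; apply: r_le_rho.
  rewrite /z mulmxDr -scalemxAr [LHS]mxE [X in _ + X]mxE Hi0 add0r.
  by rewrite mulmxB_coord.
apply: le_trans split_sum _.
have Nz_neq0 : - z != 0 by rewrite oppr_eq0.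
have Nh_neq0 : - h != 0 by rewrite oppr_eq0.
have := WDC_active_sum_le v z_neq0.
have := WDC_active_sum_le v Nz_neq0.
have := WDC_active_sum_ge v Nh_neq0.
lra.
Qed.

End Layer.

Section Network.
Variables (R : realType) (d : nat) (dims : nat -> nat).
Variables (W : forall i, 'M[R]_(dims i.+1, dims i)) (eps : R).
Hypothesis W_wdc : forall i, (i < d)%N -> WDC (W i) eps.

Lemma netG_sqnorm_le j x : 0 <= eps -> (j <= d)%N ->
  dotv (netG W j x) (netG W j x) <= (2^-1 + eps) ^+ j * dotv x x.
Proof.
move=> eps_ge0; elim: j => [|j IH] j_lt /=; first by rewrite expr0 mul1r.
rewrite relu_mulmx; have [->|Gx_neq0] := eqVneq (netG W j x) 0.
  by rewrite mulmx0 dotv0l mulr_ge0 ?dotvv_ge0 ?exprn_ge0 //; lra.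
rewrite dotv_Wplus exprS -mulrA.
apply: le_trans (WDC_active_sum_le (W_wdc j_lt) _ Gx_neq0) _.
by rewrite ler_wpM2l ?IH 1?ltnW //; lra.
Qed.

Lemma netG_neq0 j x : eps < 2^-1 -> (j <= d)%N -> x != 0 -> netG W j x != 0.
Proof.
move=> eps_lt; elim: j => [|j IH] j_lt x_neq0 //=.
have Gx_neq0 := IH (ltnW j_lt) x_neq0.
have := WDC_active_sum_ge (W_wdc j_lt) (netG W j x) Gx_neq0.
rewrite -dotv_Wplus -relu_mulmx; apply: contraTneq => ->; rewrite dotv0l -ltNge.
by rewrite mulr_gt0 ?dotvv_gt0 //; lra.
Qed.

Lemma netG_locally_lipschitz j x : 0 <= eps -> eps <= 6^-1 -> (j <= d)%N -> x != 0 ->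
  exists2 rho : R, 0 < rho & forall y z,
    normv (y - x) < rho -> normv (z - x) < rho ->
    dotv (netG W j y - netG W j z) (netG W j y - netG W j z)
      <= (2^-1 + 3 * eps) ^+ j * dotv (y - z) (y - z).
Proof.
move=> eps_ge0 eps_le; elim: j => [|j IH] j_lt x_neq0.
  by exists 1 => // y z _ _; rewrite expr0 mul1r.
have [rho1 rho1_gt0 lip_j] := IH (ltnW j_lt) x_neq0.
have Gx_neq0 : netG W j x != 0 by apply: netG_neq0 => //; [lra|apply: ltnW].
have [rho2 rho2_gt0 lip_layer] := relu_layer_locally_lipschitz (W_wdc j_lt) Gx_neq0.
have c_le1 : (2^-1 + 3 * eps) ^+ j <= 1 by apply: exprn_ile1; lra.
have c_ge0 : 0 <= (2^-1 + 3 * eps) ^+ j by apply: exprn_ge0; lra.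
exists (Num.min rho1 rho2) => [|y z]; first by rewrite lt_min rho1_gt0.
rewrite !lt_min => /andP [y_near1 y_near2] /andP [z_near1 z_near2].
have Gj_near u : normv (u - x) < rho1 -> normv (u - x) < rho2 ->
    normv (netG W j u - netG W j x) < rho2.
  move=> u_near1; apply: le_lt_trans; apply: ler_wsqrtr.
  apply: le_trans (lip_j _ _ u_near1 _) _; first by rewrite subrr normv0.
  by rewrite ler_piMl ?dotvv_ge0.
apply: le_trans (lip_layer _ _ (Gj_near _ y_near1 y_near2) (Gj_near _ z_near1 z_near2)) _.
by rewrite exprS -mulrA ler_wpM2l ?lip_j //; lra.
Qed.

End Network.

Section RRCP.
Variables (R : realType) (m k n : nat) (A : 'M[R]_(m, n)) (G : 'cV[R]_k -> 'cV[R]_n).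
Variable eps : R.
Hypotheses (eps_ge0 : 0 <= eps) (A_rrcp : RRCP A G eps).

Lemma Asgn_coord (z u : 'cV[R]_n) i :
  (Asgn A z *m u) i 0 = Num.sg ((A *m z) i 0) * (A *m u) i 0.
Proof. by rewrite /Asgn -mulmxA mul_diag_mx !mxE. Qed.

Lemma RRCP_sg_sum_le y y1 y2 :
  \sum_i (Num.sg ((A *m G y) i 0) * (A *m (G y1 - G y2)) i 0) ^+ 2
    <= (1 + 33 * eps) * dotv (G y1 - G y2) (G y1 - G y2).
Proof.
have := A_rrcp y y y1 y2 y1 y2; set u := G y1 - G y2.
have [Gy0|Gy_neq0] := eqVneq (G y) 0.
  move=> _; rewrite big1 => [|i _]; last by rewrite Gy0 mulmx0 mxE sgr0 mul0r expr0n.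
  by apply: mulr_ge0; [rewrite addr_ge0 ?mulr_ge0 | exact: dotvv_ge0].
have -> : \sum_i (Num.sg ((A *m G y) i 0) * (A *m u) i 0) ^+ 2 =
    dotv ((Asgn A (G y))^T *m Asgn A (G y) *m u) u.
  rewrite -mulmxA dotvC -dotv_mulmxl dotvE; apply: eq_bigr => i _.
  by rewrite Asgn_coord expr2.
rewrite Phi_id // mulmxBl dotvBl mul1mx -mulrA -expr2 normv_sqr.
by move=> /ler_normlP[]; lra.
Qed.

Lemma RRCP_absv_lipschitz y z :
  dotv (absv (A *m G y) - absv (A *m G z)) (absv (A *m G y) - absv (A *m G z))
    <= 2 * (1 + 33 * eps) * dotv (G y - G z) (G y - G z).
Proof.
rewrite dotvE.
apply: le_trans (_ : \sum_i ((Num.sg ((A *m G y) i 0) * (A *m (G y - G z)) i 0) ^+ 2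
    + (Num.sg ((A *m G z) i 0) * (A *m (G y - G z)) i 0) ^+ 2) <= _).
  apply: ler_sum => i _.
  have absv_sub (X Y : 'cV[R]_m) : (absv X - absv Y) i 0 = `|X i 0| - `|Y i 0|.
    by rewrite !mxE.
  by rewrite absv_sub -expr2 mulmxB_coord; apply: sqr_normr_sub_le_sg.
have := RRCP_sg_sum_le y y z; have := RRCP_sg_sum_le z y z.
rewrite big_split /=; lra.
Qed.

Lemma RRCP_absv_normv_le y z : normv (absv (A *m G y) - absv (A *m G z))
  <= Num.sqrt (2 * (1 + 33 * eps)) * normv (G y - G z).
Proof.
by apply: normv_le_sqrt (RRCP_absv_lipschitz y z); rewrite !(mulr_ge0, addr_ge0).
Qed.

End RRCP.

Section Clarke.
Variables (R : realType) (k n : nat) (g : 'cV[R]_k -> 'cV[R]_n) (x : 'cV[R]_k).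
Variables rho M : R.
Hypotheses (rho_gt0 : 0 < rho) (M_ge0 : 0 <= M).
Hypothesis g_lip : forall y z, normv (y - x) < rho -> normv (z - x) < rho ->
  normv (g y - g z) <= M * normv (y - z).

Lemma half_sqnorm_quotient_le y xi t r : 0 < t -> r <= rho ->
  normv (y - x) < r -> normv (y + t *: xi - x) < r ->
  (2^-1 * normv (g (y + t *: xi)) ^+ 2 - 2^-1 * normv (g y) ^+ 2) / t
    <= M * normv xi * (normv (g x) + M * r).
Proof.
move=> t_gt0 r_le y_near y'_near; set y' := y + t *: xi in y'_near *.
have near_rho u : normv (u - x) < r -> normv (u - x) < rho.
  by move=> /lt_le_trans; apply.
have x_near : normv (x - x) < rho by rewrite subrr normv0.
have g_near u : normv (u - x) < r -> normv (g u) <= normv (g x) + M * r.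
  move=> u_near; have := normvD (g u - g x) (g x); rewrite subrK => /le_trans; apply.
  rewrite addrC lerD2l; apply: le_trans (g_lip (near_rho _ u_near) x_near) _.
  by rewrite ler_wpM2l // ltW.
have g_step : normv (g y' - g y) <= M * (t * normv xi).
  have := g_lip (near_rho _ y'_near) (near_rho _ y_near).
  by rewrite /y' addrAC subrr add0r normvZ gtr0_norm.
rewrite ler_pdivrMr //; apply: le_trans (half_sqnormv_sub_le _ _) _.
have := ler_pM (normv_ge0 _) (addr_ge0 (normv_ge0 _) (normv_ge0 _)) g_step
  (lerD (g_near _ y'_near) (g_near _ y_near)).
nra.
Qed.

Lemma clarke_subdiff_half_sqnorm_le xi :
  clarke_subdiff (fun y => 2^-1 * normv (g y) ^+ 2) x xi -> normv xi <= M * normv (g x).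
Proof.
move=> xi_sub; set N := normv xi; set B := normv (g x).
have N_ge0 : 0 <= N := normv_ge0 xi.
have B_ge0 : 0 <= B := normv_ge0 (g x).
suff sq_le : N ^+ 2 <= M * N * B.
  have [N0|N_neq0] := eqVneq N 0; first by rewrite N0 mulr_ge0.
  have N_gt0 : 0 < N by rewrite lt_def N_neq0.
  by rewrite -(ler_pM2r N_gt0); nra.
(* Testing the definition in the direction [xi] with error [r] gives
   [N ^+ 2 - r < M * N * (B + M * r)] for every small [r]. *)
apply: (@ler_of_forall_addr _ _ _ (M * M * N + 1) rho rho_gt0) => r /andP[r_gt0 r_lt].
pose dl := r / (1 + N).
have dl_gt0 : 0 < dl by apply: divr_gt0 => //; lra.
have dlN : dl * (1 + N) = r by rewrite /dl mulfVK //; lra.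
have [y [t [y_near [/andP[t_gt0 t_lt] quot]]]] := xi_sub xi r dl r_gt0 dl_gt0.
have y_near' : normv (y - x) < r by apply: lt_le_trans y_near _; nra.
have y'_near : normv (y + t *: xi - x) < r.
  rewrite addrAC; apply: le_lt_trans (normvD _ _) _.
  by rewrite normvZ gtr0_norm // -/N -dlN; nra.
have := half_sqnorm_quotient_le t_gt0 (ltW r_lt) y_near' y'_near.
rewrite -normv_sqr -/N -/B in quot *; nra.
Qed.

End Clarke.

Section Constants.
Variable R : realType.

Lemma bernoulli_upper (a : R) n : 0 <= a -> (1 + a) ^+ n * (1 - n%:R * a) <= 1.
Proof.
move=> a_ge0; elim: n => [|n IH]; first by rewrite expr0 mul0r subr0 mulr1.
apply: le_trans IH; rewrite exprSr -mulrA; apply: ler_wpM2l.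
  by apply: exprn_ge0; lra.
have n_ge0 : 0 <= n%:R :> R by [].
rewrite -natr1; nra.
Qed.

Lemma small_eps_bounds (d : nat) (eps : R) :
  (0 < d)%N -> 0 < eps -> 100 * d%:R ^+ 3 * Num.sqrt eps <= 1 ->
  eps <= 6^-1 /\ 2 * (1 + 33 * eps) * (2^-1 + 3 * eps) ^+ d <= 4 / 2 ^+ d.
Proof.
move=> d_gt0 eps_gt0 small.
have d_ge1 : 1 <= d%:R :> R by rewrite ler1n.
set s := Num.sqrt eps in small; set D := d%:R : R in d_ge1 small *.
have s_ge0 : 0 <= s := sqrtr_ge0 eps.
have s_sqr : s ^+ 2 = eps by rewrite sqr_sqrtr // ltW.
have D3 : D <= D ^+ 3 by rewrite !exprS expr0 mulr1; nra.
have sD : 100 * D * s <= 1 by nra.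
have epsD : eps * D <= 10000^-1.
  rewrite -s_sqr; have : (100 * D * s) ^+ 2 <= 1.
    by rewrite -(expr1n _ 2) ler_sqr ?nnegrE; nra.
  nra.
split; first nra.
have two_pow : (2 : R) ^+ d > 0 by apply: exprn_gt0.
have -> : (2^-1 + 3 * eps) ^+ d = (1 + 6 * eps) ^+ d / 2 ^+ d.
  by rewrite -expr_div_n; congr (_ ^+ _); field.
rewrite mulrA ler_pM2r ?invr_gt0 //.
have bern : (1 + 6 * eps) ^+ d * (1 - D * (6 * eps)) <= 1.
  by apply: bernoulli_upper; lra.
have : 0 <= (1 + 6 * eps) ^+ d by apply: exprn_ge0; lra.
set Q := (1 + 6 * eps) ^+ d in bern *; nra.
Qed.

Lemma bound_of_sqr_le_four_div_exp2 (d : nat) (M a b e : R) :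
  (0 < d)%N -> 0 <= M -> M ^+ 2 <= 4 / 2 ^+ d -> 0 <= a -> 0 <= b -> 0 <= e ->
  M * (M * (a + b) + e) <= 8 * d%:R / 2 ^+ d * Num.max a b + 2 / Num.sqrt 2 ^+ d * e.
Proof.
move=> d_gt0 M_ge0 M_sqr a_ge0 b_ge0 e_ge0.
have M_le : M <= 2 / Num.sqrt 2 ^+ d.
  have sqrt2X : Num.sqrt 2 ^+ d ^+ 2 = 2 ^+ d :> R.
    by rewrite -exprM mulnC exprM sqr_sqrtr.
  rewrite -ler_sqr ?nnegrE ?divr_ge0 ?exprn_ge0 ?sqrtr_ge0 // expr_div_n sqrt2X.
  by rewrite [2 ^+ 2]expr2 -natrM.
rewrite mulrDr mulrA -expr2; apply: lerD; last exact: ler_wpM2r.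
have d_ge1 : 1 <= d%:R :> R by rewrite ler1n.
have I_gt0 : 0 < (2 ^+ d : R)^-1 by rewrite invr_gt0 exprn_gt0.
have a_le : a <= Num.max a b by rewrite le_max lexx.
have b_le : b <= Num.max a b by rewrite le_max lexx orbT.
set I := (2 ^+ d : R)^-1 in I_gt0 M_sqr *; set mx := Num.max a b in a_le b_le *.
have := mulr_ge0 (ltW I_gt0) (le_trans a_ge0 a_le).
nra.
Qed.

End Constants.

Theorem lemma3 (R : realType) :
  exists K C : R, 0 < K /\ 0 < C /\
  forall (d : nat) (dims : nat -> nat) (m : nat)
         (W : forall i, 'M[R]_(dims i.+1, dims i))
         (A : 'M[R]_(m, dims d)) (eps : R),
    (0 < d)%N ->
    (forall i, (i < d)%N -> (dims i < dims i.+1)%N) ->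
    0 < eps ->
    K * (d%:R) ^+ 3 * Num.sqrt eps <= 1 ->
    RRCP A (netG W d) eps ->
    (forall i, (i < d)%N -> WDC (W i) eps) ->
    forall (xs : 'cV[R]_(dims 0)) (eta : 'cV[R]_m) (x v : 'cV[R]_(dims 0)),
      xs != 0 -> x != 0 ->
      clarke_subdiff (loss A (netG W d) (absv (A *m netG W d xs) + eta)) x v ->
      normv v <= C * d%:R / 2 ^+ d * Num.max (normv x) (normv xs)
                 + 2 / (Num.sqrt 2) ^+ d * normv eta.
Proof.
exists 100, 8; do 2!split => //.
move=> d dims m W A eps d_gt0 _ eps_gt0 small A_rrcp W_wdc xs eta x xi _ x_neq0 xi_sub.
have eps_ge0 := ltW eps_gt0.
have [eps_le M_sqr_le] := small_eps_bounds d_gt0 eps_gt0 small.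
set G := netG W d in A_rrcp xi_sub *.
set a := 2 * (1 + 33 * eps) in M_sqr_le; set c := (2^-1 + 3 * eps) ^+ d in M_sqr_le.
have c_ge0 : 0 <= c by apply: exprn_ge0; lra.
have [rho rho_gt0 G_lip] := netG_locally_lipschitz W_wdc eps_ge0 eps_le (leqnn d) x_neq0.
have G_le z : normv (G z) <= Num.sqrt c * normv z.
  apply: normv_le_sqrt => //; apply: le_trans (netG_sqnorm_le W_wdc z eps_ge0 (leqnn d)) _.
  by rewrite ler_wpM2r ?dotvv_ge0 // lerXn2r ?nnegrE; lra.
pose g y := absv (A *m G y) - (absv (A *m G xs) + eta).
pose M := Num.sqrt a * Num.sqrt c.
have M_ge0 : 0 <= M by rewrite mulr_ge0 ?sqrtr_ge0.
have g_lip y z : normv (y - x) < rho -> normv (z - x) < rho ->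
    normv (g y - g z) <= M * normv (y - z).
  move=> y_near z_near; rewrite /g opprB addrA subrK.
  apply: le_trans (RRCP_absv_normv_le eps_ge0 A_rrcp y z) _.
  by rewrite -mulrA ler_wpM2l ?sqrtr_ge0 ?normv_le_sqrt ?G_lip.
have gx_le : normv (g x) <= M * (normv x + normv xs) + normv eta.
  rewrite /g opprD addrA; apply: le_trans (normvB_le _ _) _; rewrite lerD2r.
  apply: le_trans (RRCP_absv_normv_le eps_ge0 A_rrcp x xs) _.
  rewrite -mulrA ler_wpM2l ?sqrtr_ge0 //; apply: le_trans (normvB_le _ _) _.
  by rewrite mulrDr lerD.
apply: le_trans (clarke_subdiff_half_sqnorm_le rho_gt0 M_ge0 g_lip xi_sub) _.
apply: le_trans (ler_wpM2l M_ge0 gx_le) _.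
apply: bound_of_sqr_le_four_div_exp2; rewrite ?normv_ge0 //.
by rewrite exprMn !sqr_sqrtr // /a; lra.
Qed.
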